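(* Let $k\ge2$, $\theta\in\mathbb{R}\setminus\mathbb{Q}$, $p_1,\ldots,p_k\in\mathbb{Z}\setminus\{0\}$ with $\sum_{j=1}^kp_j=0$, and $\xi_1,\ldots,\xi_{k-1}\in\mathbb{Q}\cap[0,1)$ with $\{\sum_{j=1}^{k-1}\xi_j\}\in(0,1)\setminus\{1/2\}$. Consider System A: $\hat\theta_j=p_j\theta+\xi_j$ ($1\le j\le k-1$), $\hat\theta_k=p_k\theta$; and System B: $\hat\theta_j=p_j\theta+\xi_j$ ($1\le j\le k-1$), $\hat\theta_{k,l}=\mathrm{sgn}(p_k)\theta+\frac{l}{|p_k|}$ ($0\le l\le|p_k|-1$). Then Systems A and B are equivalent, i.e. they have the same effective difference number.
   Context: For a system $\hat\theta_i=q_i\theta+\zeta_i$, $i\in I$ ($I$ finite), with $\theta$ irrational, $q_i\in\mathbb{Z}\setminus\{0\}$, $\zeta_i\in\mathbb{Q}\cap[0,1)$, and for $\eta\in\mathbb{Q}$, set $\eta(\zeta_i)=\{\zeta_i-q_i\eta\}$ (fractional part), $k_0^+(\eta)=\#\{i:\eta(\zeta_i)=0,q_i>0\}$, $k_0^-(\eta)=\#\{i:\eta(\zeta_i)=0,q_i<0\}$. The absolute difference number for $\eta$ is $|k_0^+(\eta)-k_0^-(\eta)|$, and the effective difference number of the system is $\max\{|k_0^+(\eta)-k_0^-(\eta)|:\eta\in\mathbb{Q}\}$. Two such systems are called equivalent if their effective difference numbers coincide. In System A the $k$-th equation has $\zeta=0$. $\mathrm{sgn}(a)=\pm1$ according as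 $\pm a>0$. *)

From mathcomp Require Import all_boot all_order all_algebra.
Set Implicit Arguments. Unset Strict Implicit. Unset Printing Implicit Defensive.
Import Order.TTheory GRing.Theory Num.Theory.
Local Open Scope ring_scope.

(* A system  hat_theta_i = q_i theta + zeta_i  (i in a finite index set) is
   represented by the finite list of its coefficient pairs (q_i, zeta_i). *)
Definition system := seq (int * rat).

Definition frac_part (x : rat) : rat := x - (Num.floor x)%:~R.

Definition eta_shift (eta : rat) (c : int * rat) : rat :=
  frac_part (c.2 - c.1%:~R * eta).

Definition k0p (S : system) (eta : rat) : nat :=
  count (fun c => (eta_shift eta c == 0) && (0 < c.1)) S.
Definition k0m (S : system) (eta : rat) : nat :=
  count (fun c => (eta_shift eta c == 0) && (c.1 < 0)) S.

Definition abs_diff_number (S : system) (eta : rat) : nat :=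
  `|(k0p S eta)%:Z - (k0m S eta)%:Z|%N.

Definition is_eff_diff_number (S : system) (n : nat) : Prop :=
  (exists eta : rat, abs_diff_number S eta = n) /\
  (forall eta : rat, (abs_diff_number S eta <= n)%N).

Definition equivalent (S1 S2 : system) : Prop :=
  forall n : nat, is_eff_diff_number S1 n <-> is_eff_diff_number S2 n.

(* Systems A and B of Lemma 4.2; indices 1..k of the paper are 0..k-1 here. *)
Definition systemA (k : nat) (p : nat -> int) (xi : nat -> rat) : system :=
  [seq (p j, xi j) | j <- iota 0 k.-1] ++ [:: (p k.-1, 0)].

Definition systemB (k : nat) (p : nat -> int) (xi : nat -> rat) : system :=
  [seq (p j, xi j) | j <- iota 0 k.-1] ++
  [seq (Num.sg (p k.-1), (l%:R / (`|p k.-1|%N)%:R : rat)) | l <- iota 0 `|p k.-1|%N].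

From mathcomp Require Import all_boot all_order all_algebra.
From mathcomp Require Import reals.
Import Order.TTheory GRing.Theory Num.Theory.
Local Open Scope ring_scope.

(* The |p_k| equations of System B that replace the last
   equation of A all have coefficient sgn(p_k), of the same sign as p_k, and
   l/|p_k| - sgn(p_k) eta is an integer for exactly one l < |p_k| when p_k eta
   is an integer (namely l = p_k eta mod |p_k|) and for none otherwise.  Hence
   k0^+ and k0^- of A and B agree at every eta. *)

Lemma frac_part_eq0 (x : rat) : (frac_part x == 0) = (x \is a Num.int).
Proof. by rewrite /frac_part subr_eq0 eq_sym intrEfloor. Qed.

Lemma count_iota_eqz_mod (n : nat) (m : int) : (0 < n)%N ->
  count (fun l : nat => (l%:Z == m %[mod n])%Z) (iota 0 n) = 1%N.
Proof.
move=> n_gt0; have n0 : n%:Z != 0 by rewrite eqz_nat -lt0n.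
have m_ge0 := modz_ge0 m n0.
have m_lt_n : (m %% n)%Z < n by apply: ltz_mod.
rewrite (@eq_in_count _ _ (pred1 `|(m %% n)%Z|%N)).
  by rewrite count_uniq_mem ?iota_uniq // mem_iota add0n -ltz_nat gez0_abs ?m_lt_n.
move=> l; rewrite mem_iota add0n => l_range.
by rewrite modz_small ?ler0n ?ltz_nat // -{1}(gez0_abs m_ge0) eqz_nat.
Qed.

Section IntegralShifts.
Variable F : archiNumFieldType.

Lemma intr_divz_int (m d : int) : d != 0 ->
  (m%:~R / d%:~R : F) \is a Num.int = (d %| m)%Z.
Proof.
move=> d0; have dF0 : d%:~R != 0 :> F by rewrite intr_eq0.
apply/idP/idP => [/intrP[z hz]|/dvdzP[z ->]]; last first.
  by rewrite intrM mulfK // intr_int.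
apply/dvdzP; exists z; apply: (@intr_inj F).
by rewrite intrM -hz mulfVK.
Qed.

Lemma count_iota_shift_int (n : nat) (e : F) : (0 < n)%N ->
  count (fun l : nat => l%:R / n%:R - e \is a Num.int) (iota 0 n)
  = (n%:R * e \is a Num.int).
Proof.
move=> n_gt0; have nF0 : n%:R != 0 :> F by rewrite pnatr_eq0 -lt0n.
have [/intrP[m ne_m] | ne_int] := boolP (n%:R * e \is a Num.int).
- apply: etrans (count_iota_eqz_mod n m n_gt0).
  have -> : e = m%:~R / n%:R by rewrite -ne_m mulrAC divff ?mul1r.
  apply: eq_count => l /=.
  rewrite -mulrBl -[l%:R]/(l%:Z%:~R) -[n%:R]/(n%:Z%:~R) -intrB.
  by rewrite intr_divz_int ?eqz_mod_dvd ?eqz_nat -?lt0n.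
- apply/eqP; rewrite eqn0Ngt -has_count; apply/hasPn => l _ /=.
  apply: contra ne_int => shift_int.
  have -> : n%:R * e = l%:R - n%:R * (l%:R / n%:R - e).
    by rewrite mulrBr mulrCA divff ?mulr1 // opprB addrC subrK.
  by rewrite rpredB ?rpredM ?rpred_nat.
Qed.

End IntegralShifts.

Definition sg_split (p : int) : system :=
  [seq (Num.sg p, l%:R / `|p|%N%:R) | l <- iota 0 `|p|%N].

Lemma count_sg_split_eta_shift0 (p : int) (eta : rat) : p != 0 ->
  count (fun c => eta_shift eta c == 0) (sg_split p) = (eta_shift eta (p, 0) == 0).
Proof.
move=> p0; have n_gt0 : (0 < `|p|)%N by rewrite absz_gt0.
rewrite count_map /eta_shift /= frac_part_eq0 sub0r rpredN.
under eq_count => l do rewrite /= frac_part_eq0.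
rewrite count_iota_shift_int // mulrA natr_absz -intrM.
by rewrite [`|p| * _]mulrC mulr_sg_norm.
Qed.

Lemma count_sg_split_signed (p : int) (eta : rat) (f : int -> bool) :
  p != 0 -> f (Num.sg p) = f p ->
  count (fun c => (eta_shift eta c == 0) && f c.1) (sg_split p)
  = count (fun c => (eta_shift eta c == 0) && f c.1) [:: (p, 0)].
Proof.
move=> p0 f_sg; rewrite /= addn0.
case: (f p) in f_sg *.
- rewrite andbT -(count_sg_split_eta_shift0 p eta p0).
  by apply: eq_in_count => _ /mapP[l _ ->]; rewrite /= f_sg andbT.
- rewrite andbF; apply/eqP; rewrite eqn0Ngt -has_count.
  by apply/hasPn => _ /mapP[l _ ->]; rewrite /= f_sg andbF.
Qed.

Lemma k0p_systemB (k : nat) (p : nat -> int) (xi : nat -> rat) (eta : rat) :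
  p k.-1 != 0 -> k0p (systemB k p xi) eta = k0p (systemA k p xi) eta.
Proof.
move=> pk0; rewrite /k0p !count_cat.
by rewrite (count_sg_split_signed _ _ (fun z => 0 < z)) ?sgr_gt0.
Qed.

Lemma k0m_systemB (k : nat) (p : nat -> int) (xi : nat -> rat) (eta : rat) :
  p k.-1 != 0 -> k0m (systemB k p xi) eta = k0m (systemA k p xi) eta.
Proof.
move=> pk0; rewrite /k0m !count_cat.
by rewrite (count_sg_split_signed _ _ (fun z => z < 0)) ?sgr_lt0.
Qed.

Lemma eq_is_eff_diff_number (S1 S2 : system) :
  abs_diff_number S1 =1 abs_diff_number S2 -> equivalent S1 S2.
Proof.
move=> eq_adn n; rewrite /is_eff_diff_number.
split=> -[[eta adn_eta] adn_le]; split=> [|e].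
- by exists eta; rewrite -eq_adn.
- by rewrite -eq_adn.
- by exists eta; rewrite eq_adn.
- by rewrite eq_adn.
Qed.

Theorem lemma4p2 (R : realType) (k : nat) (theta : R) (p : nat -> int) (xi : nat -> rat) :
  (2 <= k)%N ->
  (forall q : rat, theta != ratr q) ->
  (forall j, (j < k)%N -> p j != 0) ->
  \sum_(j < k) p j = 0 ->
  (forall j, (j < k.-1)%N -> 0 <= xi j < 1) ->
  frac_part (\sum_(j < k.-1) xi j) != 0 ->
  frac_part (\sum_(j < k.-1) xi j) != 1 / 2 ->
  equivalent (systemA k p xi) (systemB k p xi).
Proof.
move=> k_ge2 _ p_neq0 _ _ _ _.
have pk0 : p k.-1 != 0 by apply: p_neq0; rewrite prednK // (leq_trans _ k_ge2).
apply: eq_is_eff_diff_number => eta.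
by rewrite /abs_diff_number k0p_systemB // k0m_systemB.
Qed.
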